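(* Let $C=L_1;\ldots;L_D$ be a sorting network on $n$ channels containing no redundant comparators, and suppose that $C$ contains a comparator $(i,j)$ in layer $L_d$ with $j>i+1$. Then at least one of the channels $i$ and $j$ is used in some layer $L_{d'}$ with $d'>d$.
   Context: Channels are numbered $1,\ldots,n$. A comparator network is a sequence $C=L_1;\ldots;L_D$ of layers; each layer is a set of comparators $(i,j)$ with $1\le i<j\le n$, each channel occurring in at most one comparator of a layer. An input $\bar x\in\{0,1\}^n$ propagates: $\bar x_0=\bar x$, and $\bar x_k$ is obtained from $\bar x_{k-1}$ by, for each $(i,j)\in L_k$, putting the minimum of the values at positions $i,j$ at position $i$ and the maximum at position $j$. The output is $C(\bar x)=\bar x_D$; $C$ is a sorting network if $C(\bar x)$ is sorted non-decreasingly for all $\bar x\in\{0,1\}^n$. A comparator $(i,j)\in L_\ell$ is redundant if for every input $\bar x$ we have $(\bar x_{\ell-1})_i\le(\bar x_{\ell-1})_j$. A channel is used in layer $L_\ell$ if it occurs in some comparator of $L_\ell$. *)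

From mathcomp Require Import all_boot.
Set Implicit Arguments. Unset Strict Implicit. Unset Printing Implicit Defensive.

(* Channels 1..n of the paper are represented by 'I_n (0..n-1), shift by one.
   A comparator is a pair (i, j) of channels; a layer is a sequence of
   comparators; a network is a sequence of layers L_1; ...; L_D, with layer
   L_(d+1) of the paper being [nth [::] C d]. Inputs are 0/1 vectors
   'I_n -> bool (false = 0 < true = 1). *)

Definition comparator n := ('I_n * 'I_n)%type.
Definition layer n := seq (comparator n).
Definition network n := seq (layer n).

Definition channels n (L : layer n) : seq 'I_n :=
  flatten [seq [:: c.1; c.2] | c <- L].

Definition wf_layer n (L : layer n) : bool :=
  all (fun c : comparator n => c.1 < c.2) L && uniq (channels L).

Definition wf_network n (C : network n) : bool := all (@wf_layer n) C.

(* applying a layer to a vector (for well-formed layers this is exactly the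
   simultaneous application of all its comparators) *)
Definition apply_layer n (L : layer n) (x : 'I_n -> bool) : 'I_n -> bool :=
  fun k =>
    match [seq c <- L | (c.1 == k) || (c.2 == k)] with
    | c :: _ => if c.1 == k then x c.1 && x c.2 else x c.1 || x c.2
    | [::] => x k
    end.

Definition run_prefix n (C : network n) (d : nat) (x : 'I_n -> bool) :=
  foldl (fun y L => apply_layer L y) x (take d C).

Definition output n (C : network n) (x : 'I_n -> bool) := run_prefix C (size C) x.

Definition sorted_vec n (y : 'I_n -> bool) : bool :=
  [forall i : 'I_n, forall j : 'I_n, (i <= j) ==> (y i <= y j)].

Definition sorting_network n (C : network n) : Prop :=
  wf_network C /\ forall x : 'I_n -> bool, sorted_vec (output C x).

(* comparator c of layer with 0-based index d (paper's L_(d+1)) is redundant *)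
Definition redundant n (C : network n) (d : nat) (c : comparator n) : Prop :=
  forall x : 'I_n -> bool, run_prefix C d x c.1 <= run_prefix C d x c.2.

Definition no_redundant n (C : network n) : Prop :=
  forall d c, d < size C -> c \in nth [::] C d -> ~ redundant C d c.

Definition used_in n (C : network n) (d : nat) (k : 'I_n) : bool :=
  k \in channels (nth [::] C d).

From mathcomp Require Import all_boot zify.
Set Implicit Arguments. Unset Strict Implicit. Unset Printing Implicit Defensive.

(* If neither channel i nor j is used after layer d, the network's output on
   i and j is the minimum and maximum of the two values entering (i, j).
   Comparator networks respect the covering relation of the Boolean lattice
   (turning one 0 of the input into a 1 turns exactly one 0 of every
   intermediate vector into a 1), and the sorted output of a sorting network is
   a threshold vector fixed by the number of ones. Hence if the comparator
   exchanges a 1 on i with a 0 on j for some input, it still does so after any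
   inverted pair of the input is exchanged: of the two paths through the
   lattice, via one fewer or one more 1, one keeps the property, because
   j > i + 1 leaves room for the output threshold. Exchanging inversions strictly
   increases the weight sum_k k x_k, so we reach a sorted input; but the network
   fixes sorted inputs, which never present 1 on i and 0 on j. So the comparator
   would be redundant. *)

Section Vectors.
Variable n : nat.
Implicit Types (x y u v s : 'I_n -> bool) (k p q : 'I_n).

Definition raise p x : 'I_n -> bool := fun k => (k == p) || x k.

Definition lower p x : 'I_n -> bool := fun k => (k != p) && x k.

Definition covered x y := exists2 p, x p = false & y =1 raise p x.

Lemma covered_le x y k : covered x y -> x k -> y k.
Proof. by case=> p _ e xk; rewrite e /raise xk orbT. Qed.

Lemma covered_raise p x : x p = false -> covered x (raise p x).
Proof. by exists p. Qed.

Lemma lower_at p x : lower p x p = false.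
Proof. by rewrite /lower eqxx. Qed.

Lemma raise_lower p x : x p -> raise p (lower p x) =1 x.
Proof. by move=> xp k; rewrite /raise /lower; case: eqVneq => [-> |]. Qed.

Lemma covered_lower p x : x p -> covered (lower p x) x.
Proof. by move=> xp; exists p; [apply: lower_at | apply/fsym/raise_lower]. Qed.

Definition weight x := \sum_k x k * k.

Lemma weight_covered x y p : x p = false -> y =1 raise p x -> weight y = weight x + p.
Proof.
move=> xp e; rewrite /weight (bigD1 p) //= [in RHS](bigD1 p) //= e /raise eqxx xp.
rewrite mul1n mul0n add0n addnC.
by congr (_ + _); apply: eq_bigr => k /negbTE kp; rewrite e /raise kp.
Qed.

Lemma weight_exchange x p q : x p -> ~~ x q ->
  weight (raise q (lower p x)) + p = weight x + q.
Proof.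
move=> xp xq; have lower_q : lower p x q = false by rewrite /lower (negbTE xq) andbF.
rewrite (weight_covered lower_q (frefl _)).
by rewrite (weight_covered (lower_at p x) (fsym (raise_lower xp))) addnAC.
Qed.

Lemma weight_le x : weight x <= n * n.
Proof.
have -> : n * n = \sum_(k : 'I_n) n by rewrite sum_nat_const card_ord.
apply: leq_sum => k _.
by case: (x k); rewrite ?mul1n ?mul0n // ltnW.
Qed.

Definition threshold (m : nat) : 'I_n -> bool := fun k => m <= k.

Lemma sorted_vecP s : reflect (forall p q, p <= q -> s p -> s q) (sorted_vec s).
Proof.
apply: (iffP forallP) => [sorted_s p q pq | sorted_s p].
  by have /forallP /(_ q) /implyP /(_ pq) := sorted_s p; case: (s p); case: (s q).
by apply/forallP => q; apply/implyP => pq; case sp: (s p) => //; rewrite (sorted_s p q).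
Qed.

Lemma unsorted_inversion s : ~~ sorted_vec s -> exists p q, [/\ p < q, s p & ~~ s q].
Proof.
case/forallPn => p /forallPn [q]; rewrite negb_imply => /andP [pq].
case sp: (s p); case sq: (s q) => // _; exists p, q; split; rewrite ?sq //.
by rewrite ltn_neqAle pq andbT; apply: contraTneq sp => /val_inj ->; rewrite sq.
Qed.

Lemma covered_sorted_threshold x y : covered x y -> sorted_vec x -> sorted_vec y ->
  exists p, x =1 threshold p.+1 /\ y =1 threshold p.
Proof.
move=> [p xp e] /sorted_vecP sx /sorted_vecP sy; exists p.
have yp : y p by rewrite e /raise eqxx.
suff xE : x =1 threshold p.+1.
  by split=> // k; rewrite e /raise xE /threshold [RHS]leq_eqVlt eq_sym.
move=> k; rewrite /threshold; case: (ltngtP p k) => [pk | kp | /val_inj <-].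
- have := sy p k (ltnW pk) yp; rewrite e /raise; case: eqVneq => [kp | _ //].
  by rewrite kp ltnn in pk.
- by apply/negbTE/negP => /(sx k p (ltnW kp)); rewrite xp.
- by rewrite xp.
Qed.

Lemma threshold_succ_inj p q : threshold p.+1 =1 threshold q.+1 -> p = q.
Proof.
move=> e; apply: val_inj; apply/eqP.
move: (e p) (e q); rewrite /threshold !ltnn => /esym qp pq.
by rewrite eqn_leq leqNgt qp leqNgt pq.
Qed.

Lemma covered_sorted_unique u x y : covered u x -> covered u y ->
  sorted_vec u -> sorted_vec x -> sorted_vec y -> x =1 y.
Proof.
move=> ux uy su sx sy.
have [p [up xp]] := covered_sorted_threshold ux su sx.
have [q [uq yq]] := covered_sorted_threshold uy su sy.
have pq : p = q by apply: threshold_succ_inj => k; rewrite -up uq.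
by move=> k; rewrite xp yq pq.
Qed.

Lemma covered_sorted_gap u x v (i j : 'I_n) : covered u x -> covered x v ->
  sorted_vec u -> sorted_vec x -> sorted_vec v -> ~~ u j -> v i -> j <= i.+1.
Proof.
move=> ux xv su sx sv.
have [p [up xp]] := covered_sorted_threshold ux su sx.
have [q [xq vq]] := covered_sorted_threshold xv sx sv.
rewrite up vq /threshold => pj qi; case: (leqP j i.+1) => // lt_ij.
have := xp (Ordinal (ltn_trans lt_ij (ltn_ord j))); rewrite xq /threshold /= => /esym.
by rewrite ltnS qi => /leq_ltn_trans /(_ lt_ij); rewrite (negbTE pj).
Qed.

End Vectors.

Section Layers.
Variable n : nat.
Implicit Types (L : layer n) (c : comparator n) (x y : 'I_n -> bool) (k p : 'I_n).

Definition touches c k := (c.1 == k) || (c.2 == k).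

Lemma channelsP L k : reflect (exists2 c, c \in L & touches c k) (k \in channels L).
Proof.
apply: (iffP flattenP) => [[s /mapP [c cL ->]] | [c cL kc]].
  by rewrite !inE /touches => kc; exists c; rewrite // eq_sym orbC eq_sym orbC.
by exists [:: c.1; c.2]; [apply/mapP; exists c | rewrite !inE eq_sym orbC eq_sym orbC].
Qed.

Lemma wf_layer_lt L c : wf_layer L -> c \in L -> c.1 < c.2.
Proof. by case/andP=> /allP lt_L _ /lt_L. Qed.

Lemma wf_layer_neq L c : wf_layer L -> c \in L -> c.1 != c.2.
Proof. by move=> wf cL; apply: contraTneq (wf_layer_lt wf cL) => ->; rewrite ltnn. Qed.

Lemma touches_uniq L c c' k : wf_layer L -> c \in L -> c' \in L ->
  touches c k -> touches c' k -> c = c'.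
Proof.
elim: L => // a L IH /andP [/= /andP [_ ltL]].
rewrite /channels /= -/(channels L) => /and3P [a1L a2L uL].
have wfL : wf_layer L by rewrite /wf_layer ltL uL.
have touch_a d : d \in L -> touches d k -> touches a k -> False.
  move=> dL dk /orP [] /eqP ak; have : k \in channels L by apply/channelsP; exists d.
    by rewrite -ak; apply/negP; apply: contra a1L; rewrite inE orbC => ->.
  by rewrite -ak; apply/negP.
rewrite !inE => /orP [/eqP -> | cL] /orP [/eqP -> | c'L] ck c'k //.
- by case: (touch_a c').
- by case: (touch_a c).
- exact: IH.
Qed.

Lemma apply_layer_touches L c x k : wf_layer L -> c \in L -> touches c k ->
  apply_layer L x k = if c.1 == k then x c.1 && x c.2 else x c.1 || x c.2.
Proof.
move=> wf cL ck; rewrite /apply_layer.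
have : c \in [seq c <- L | touches c k] by rewrite mem_filter ck.
case E: [seq c <- L | _] => [|c' s] //= _.
have : c' \in [seq c <- L | touches c k] by rewrite /touches E inE eqxx.
by rewrite mem_filter => /andP [c'k c'L]; rewrite (touches_uniq wf c'L cL c'k ck).
Qed.

Lemma apply_layer_untouched L x k : k \notin channels L -> apply_layer L x k = x k.
Proof.
move=> kL; rewrite /apply_layer.
case E: [seq c <- L | _] => [|c s] //.
have : c \in [seq c <- L | touches c k] by rewrite /touches E inE eqxx.
by rewrite mem_filter => /andP [ck cL]; case/negP: kL; apply/channelsP; exists c.
Qed.

Lemma apply_layer_min L c x : wf_layer L -> c \in L -> apply_layer L x c.1 = x c.1 && x c.2.
Proof. by move=> wf cL; rewrite (apply_layer_touches x wf cL) ?eqxx // /touches eqxx. Qed.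

Lemma apply_layer_max L c x : wf_layer L -> c \in L -> apply_layer L x c.2 = x c.1 || x c.2.
Proof.
move=> wf cL; rewrite (apply_layer_touches x wf cL) /touches ?eqxx ?orbT //.
by rewrite (negbTE (wf_layer_neq wf cL)).
Qed.

Lemma apply_layer_ext L x y : x =1 y -> apply_layer L x =1 apply_layer L y.
Proof. by move=> e k; rewrite /apply_layer; case: [seq c <- L | _] => [|c s]; rewrite !e. Qed.

Lemma apply_layer_sorted L x : wf_layer L -> sorted_vec x -> apply_layer L x =1 x.
Proof.
move=> wf /forallP sx k.
have [/channelsP [c cL /orP [] /eqP <-] | kL] := boolP (k \in channels L);
  last exact: apply_layer_untouched.
all: have /forallP /(_ c.2) /implyP le12 := sx c.1.
all: have {le12} := le12 (ltnW (wf_layer_lt wf cL)).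
- by rewrite apply_layer_min //; case: (x c.1); case: (x c.2).
- by rewrite apply_layer_max //; case: (x c.1); case: (x c.2).
Qed.

Lemma apply_layer_raise_off L x p k : wf_layer L -> k != p ->
    (forall c, c \in L -> touches c k -> ~~ touches c p) ->
  apply_layer L (raise p x) k = apply_layer L x k.
Proof.
move=> wf kp off; have [/channelsP [c cL ck] | kL] := boolP (k \in channels L).
  have /norP [/negbTE c1p /negbTE c2p] := off c cL ck.
  by rewrite !(apply_layer_touches _ wf cL ck) /raise c1p c2p.
by rewrite !apply_layer_untouched // /raise (negbTE kp).
Qed.

Lemma apply_layer_raise L x p : wf_layer L -> x p = false ->
  covered (apply_layer L x) (apply_layer L (raise p x)).
Proof.
move=> wf xp; have [/channelsP [c cL cp] | pL] := boolP (p \in channels L); last first.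
  exists p; first by rewrite apply_layer_untouched.
  move=> k; have [-> | kp] := eqVneq k p; first by rewrite !apply_layer_untouched // /raise eqxx.
  rewrite [RHS]/raise (negbTE kp) apply_layer_raise_off // => c cL ck.
  by apply: contra pL => cp; apply/channelsP; exists c.
have c12 := wf_layer_neq wf cL.
exists (if x c.1 || x c.2 then c.1 else c.2).
  case: ifP => [_ | /norP [/negbTE x1 /negbTE x2]].
    by rewrite apply_layer_min //; case/orP: cp => /eqP ->; rewrite xp ?andbF.
  by rewrite apply_layer_max // x1 x2.
move=> k; have [/orP [] /eqP <- | ck] := boolP (touches c k).
1,2: rewrite [RHS]/raise !(apply_layer_min, apply_layer_max) // /raise;
  have c21 : c.2 != c.1 by rewrite eq_sym.
1,2: case/orP: cp => /eqP ep; subst p; move: xp;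
  by case: (x c.1); case: (x c.2); rewrite //= ?eqxx ?(negbTE c12) ?(negbTE c21).
have kq : k != (if x c.1 || x c.2 then c.1 else c.2).
  by case: ifP => _; apply: contraNneq ck => ->; rewrite /touches eqxx ?orbT.
rewrite [RHS]/raise (negbTE kq) apply_layer_raise_off //.
- by apply: contraNneq ck => ->.
- move=> c' c'L c'k; apply: contraNN ck => c'p.
  by rewrite -(touches_uniq wf c'L cL c'p cp).
Qed.

Lemma apply_layer_covered L x y : wf_layer L -> covered x y ->
  covered (apply_layer L x) (apply_layer L y).
Proof.
move=> wf [p xp e]; have [q yq e'] := apply_layer_raise wf xp.
by exists q => // k; rewrite (apply_layer_ext L e) e'.
Qed.

End Layers.

Section Networks.
Variables (n : nat) (C : network n).
Hypothesis wfC : wf_network C.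
Implicit Types (x y s : 'I_n -> bool) (k : 'I_n).

Lemma wf_network_nth m : wf_layer (nth [::] C m).
Proof.
case: (ltnP m (size C)) => [lt_mC | le_Cm]; first exact: (all_nthP [::] wfC).
by rewrite nth_default.
Qed.

Lemma run_prefix0 x : run_prefix C 0 x = x.
Proof. by rewrite /run_prefix take0. Qed.

Lemma run_prefix_succ m x :
  run_prefix C m.+1 x = apply_layer (nth [::] C m) (run_prefix C m x).
Proof.
rewrite /run_prefix; case: (ltnP m (size C)) => [lt_mC | le_Cm].
  by rewrite (take_nth [::] lt_mC) foldl_rcons.
by rewrite nth_default // !take_oversize // ltnW.
Qed.

Lemma run_prefix_covered m x y : covered x y -> covered (run_prefix C m x) (run_prefix C m y).
Proof.
move=> xy; elim: m => [|m IH]; first by rewrite !run_prefix0.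
by rewrite !run_prefix_succ; apply: apply_layer_covered (wf_network_nth m) IH.
Qed.

Lemma run_prefix_sorted m s : sorted_vec s -> run_prefix C m s =1 s.
Proof.
move=> ss; elim: m => [|m IH] k; first by rewrite run_prefix0.
by rewrite run_prefix_succ (apply_layer_ext _ IH) apply_layer_sorted ?wf_network_nth.
Qed.

Lemma run_prefix_untouched d m k x : d <= m ->
    (forall d', d <= d' < m -> k \notin channels (nth [::] C d')) ->
  run_prefix C m x k = run_prefix C d x k.
Proof.
elim: m => [|m IH]; first by rewrite leqn0 => /eqP ->.
rewrite leq_eqVlt ltnS => /orP [/eqP -> // | le_dm] untouched.
rewrite run_prefix_succ apply_layer_untouched; last by rewrite untouched // le_dm /=.
by rewrite IH // => d' /andP [le_dd' lt_d'm]; rewrite untouched // le_dd' ltnW.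
Qed.

Lemma output_last_use d k x : d < size C ->
    (forall d', d < d' < size C -> k \notin channels (nth [::] C d')) ->
  output C x k = apply_layer (nth [::] C d) (run_prefix C d x) k.
Proof.
move=> lt_dC untouched.
by rewrite /output (run_prefix_untouched (d := d.+1)) ?run_prefix_succ.
Qed.

End Networks.

Section LastComparator.
Variables (n : nat) (Y O : ('I_n -> bool) -> 'I_n -> bool) (i j : 'I_n).
Hypothesis Y_covered : forall x y, covered x y -> covered (Y x) (Y y).
Hypothesis O_covered : forall x y, covered x y -> covered (O x) (O y).
Hypothesis O_sorted : forall x, sorted_vec (O x).
Hypothesis Y_sorted : forall s, sorted_vec s -> Y s =1 s.
Hypothesis O_i : forall x, O x i = Y x i && Y x j.
Hypothesis O_j : forall x, O x j = Y x i || Y x j.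
Hypothesis lt_ij : i.+1 < j.
Implicit Types (x y : 'I_n -> bool) (p q : 'I_n).

(* [Y x] is the vector entering the comparator (i, j), [O x] the output. *)
Definition swaps x := Y x i && ~~ Y x j.

Lemma swaps_covered_up x y : covered x y -> swaps x -> ~~ O y i -> swaps y.
Proof. by move=> xy /andP [/(covered_le (Y_covered xy)) yi _]; rewrite O_i /swaps yi. Qed.

Lemma swaps_covered_down x y : covered x y -> swaps y -> O x j -> swaps x.
Proof.
move=> xy /andP [_ /(contra (covered_le (Y_covered xy))) xj].
by rewrite O_j /swaps (negbTE xj) orbF andbT.
Qed.

Lemma swaps_exchange x p q : p < q -> x p -> ~~ x q ->
  swaps x -> swaps (raise q (lower p x)).
Proof.
move=> lt_pq xp xq sx.
have pq : p != q by apply: contraTneq lt_pq => ->; rewrite ltnn.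
set u := lower p x; set w := raise q u; set v := raise q x.
have ux : covered u x := covered_lower xp.
have uw : covered u w by apply: covered_raise; rewrite /u /lower (negbTE xq) andbF.
have xv : covered x v := covered_raise (negbTE xq).
have wv : covered w v.
  exists p => [|k]; first by rewrite /w /u /raise /lower (negbTE pq) eqxx.
  by rewrite /w /u /v /raise /lower; case: (eqVneq k p) => [-> |]; rewrite ?xp ?orbT.
(* w is reached from x down through u or up through v; one route keeps the exchange. *)
have Ow : O x =1 O w := covered_sorted_unique (O_covered ux) (O_covered uw)
  (O_sorted _) (O_sorted _) (O_sorted _).
have Oxi : ~~ O x i by case/andP: sx => _ /negbTE Yxj; rewrite O_i Yxj andbF.
have Oxj : O x j by case/andP: sx => Yxi _; rewrite O_j Yxi.
have [Ouj | Ouj] := boolP (O u j).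
  by apply: (swaps_covered_up uw (swaps_covered_down ux sx Ouj)); rewrite -Ow.
have [Ovi | Ovi] := boolP (O v i).
  have := covered_sorted_gap (O_covered ux) (O_covered xv)
    (O_sorted _) (O_sorted _) (O_sorted _) Ouj Ovi.
  by rewrite leqNgt lt_ij.
by apply: (swaps_covered_down wv (swaps_covered_up xv sx Ovi)); rewrite -Ow.
Qed.

Lemma never_swaps x : ~~ swaps x.
Proof.
have [m] := ubnP (n * n - weight x); elim: m x => // m IH x lt_m.
have [sx | /unsorted_inversion [p [q [lt_pq xp xq]]]] := boolP (sorted_vec x).
  rewrite /swaps !Y_sorted // negb_and negbK -implybE; apply/implyP.
  exact: (elimT (sorted_vecP _) sx _ _ (ltnW (ltnW lt_ij))).
apply: contra (swaps_exchange lt_pq xp xq) (IH _ _).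
have := weight_exchange xp xq; have := weight_le (raise q (lower p x)); lia.
Qed.

Lemma last_comparator_ordered x : Y x i <= Y x j.
Proof. by have := never_swaps x; rewrite /swaps; case: (Y x i); case: (Y x j). Qed.

End LastComparator.

Theorem corollary1 (n : nat) (C : network n) (d : nat) (i j : 'I_n) :
  sorting_network C ->
  no_redundant C ->
  d < size C ->
  (i, j) \in nth [::] C d ->
  i.+1 < j ->
  exists d', d < d' < size C /\ (used_in C d' i || used_in C d' j).
Proof.
move=> [wfC sortC] nored lt_dC ijC lt_ij.
pose used d' := used_in C d' i || used_in C d' j.
have [/hasP [d' later_d' used_d'] | /hasPn unused] :=
  boolP (has used (iota d.+1 (size C - d.+1))).
  by exists d'; move: later_d'; rewrite mem_iota subnKC.
have untouched d' : d < d' < size C ->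
    (i \notin channels (nth [::] C d')) && (j \notin channels (nth [::] C d')).
  case/andP=> lt_dd' lt_d'C; have := unused d'.
  by rewrite mem_iota subnKC // lt_dd' lt_d'C /used /used_in negb_or => /(_ isT).
case: (nored d (i, j) lt_dC ijC) => x.
have wfL := wf_network_nth wfC d.
apply: (last_comparator_ordered (O := output C)) => // [y z | y z | s | y | y].
- exact: run_prefix_covered.
- exact: run_prefix_covered.
- exact: run_prefix_sorted.
- rewrite (output_last_use _ lt_dC) => [|d' /untouched /andP [] //].
  exact: apply_layer_min.
- rewrite (output_last_use _ lt_dC) => [|d' /untouched /andP [] //].
  exact: apply_layer_max.
Qed.
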